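(* Let $G$ be a finite connected graph of diameter $2$. If $G$ is Bonnet–Myers sharp, then $G$ is isomorphic to the cocktail party graph $CP(m)$ for some $m\ge 2$. Conversely, every $CP(m)$ with $m\ge2$ is a Bonnet–Myers sharp graph of diameter $2$.
   Context: All graphs are finite, simple, connected and undirected, with the combinatorial shortest-path distance $d$. For $V=\{v_1,\dots,v_n\}$, $D=(d(v_i,v_j))_{i,j=1}^n$ is the distance matrix and $\mathbf{1}_n$ the all-ones column vector. When $DK=n\mathbf{1}_n$ has solutions, the Steinerberger curvature is a solution $K$ for which $\min_iK_i$ is maximal among all solutions. $G$ is Bonnet–Myers sharp if $DK=n\mathbf{1}_n$ has a solution and its Steinerberger curvature $K$ satisfies $\min_iK_i=2/\mathrm{diam}(G)$. The cocktail party graph $CP(m)$ is the complete graph $K_{2m}$ with the edges of a perfect matching removed. *)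

From mathcomp Require Import all_boot all_order all_algebra.
From mathcomp Require Import reals.
Set Implicit Arguments. Unset Strict Implicit. Unset Printing Implicit Defensive.
Import Order.TTheory GRing.Theory Num.Theory.

Definition simple_graph (T : finType) (e : rel T) : Prop :=
  symmetric e /\ irreflexive e.

Definition connected_graph (T : finType) (e : rel T) : Prop :=
  forall x y : T, connect e x y.

Fixpoint ball (T : finType) (e : rel T) (k : nat) (x : T) : {set T} :=
  match k with
  | 0 => [set x]
  | k'.+1 => ball e k' x :|: [set y | [exists z in ball e k' x, e z y]]
  end.

(* combinatorial shortest-path distance: least k with y in ball e k x
   (for a connected graph this is < #|T|) *)
Definition dist (T : finType) (e : rel T) (x y : T) : nat :=
  find (fun k => y \in ball e k x) (iota 0 #|T|).

Definition diam (T : finType) (e : rel T) : nat :=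
  \max_(x : T) \max_(y : T) dist e x y.

Definition curv_eq (R : realType) (T : finType) (e : rel T) (K : T -> R) : Prop :=
  forall i : T, (\sum_(j : T) (dist e i j)%:R * K j = (#|T|)%:R)%R.

Definition is_min_value (R : realType) (T : finType) (K : T -> R) (m : R) : Prop :=
  (exists i, K i = m) /\ (forall i, (m <= K i)%R).

Definition steinerberger_curvature (R : realType) (T : finType) (e : rel T)
    (K : T -> R) : Prop :=
  curv_eq e K /\
  forall K' : T -> R, curv_eq e K' ->
    forall m m' : R, is_min_value K m -> is_min_value K' m' -> (m' <= m)%R.

Definition bonnet_myers_sharp (R : realType) (T : finType) (e : rel T) : Prop :=
  (exists K : T -> R, curv_eq e K) /\
  exists K : T -> R, steinerberger_curvature e K /\
    is_min_value K (2%:R / (diam e)%:R)%R.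

(* Cocktail party graph CP(m): vertices (i, b), i < m, b : bool; it is K_{2m}
   minus the perfect matching {(i,false),(i,true)}. *)
Definition cp_rel (m : nat) : rel ('I_m * bool) :=
  fun u v => u.1 != v.1.
Arguments cp_rel m : clear implicits.

Definition graph_iso (T1 T2 : finType) (e1 : rel T1) (e2 : rel T2) : Prop :=
  exists f : T1 -> T2, bijective f /\ forall x y, e2 (f x) (f y) = e1 x y.

(* If G has diameter 2 and is Bonnet-Myers sharp, its Steinerberger curvature
   K has minimum 2/diam = 1.  For u, v at distance 2, d(u,y) + d(v,y) >= 2 for
   every y, and adding rows u and v of D K = n 1 shows that K >= 1 forces K = 1.
   Hence every row of D sums to n; since all distances are 0, 1 or 2, this says
   that every vertex has exactly one non-neighbour other than itself.  That
   non-neighbour map is a fixed-point-free involution, whose pairs form the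
   perfect matching missing from G, so G is CP(m), with m >= 2 by connectivity.
   Conversely, the rows of D sum to n in CP(m), so K = 1 solves D K = n 1, and
   the same row argument shows that no solution has minimum above 1. *)

From mathcomp Require Import all_boot all_order all_algebra.
From mathcomp Require Import reals.
From mathcomp Require Import lra zify.
Set Implicit Arguments. Unset Strict Implicit. Unset Printing Implicit Defensive.
Import Order.TTheory GRing.Theory Num.Theory.

Definition nonadj (T : finType) (e : rel T) (x : T) : {set T} :=
  [set y | (y != x) && ~~ e x y].

Section Distance.
Variables (T : finType) (e : rel T).

Lemma mem_ball1 x y : (y \in ball e 1 x) = (y == x) || e x y.
Proof.
rewrite /= !inE; congr orb; apply/existsP/idP => [[z /andP[/set1P -> //]]|exy].
by exists x; rewrite inE eqxx exy.
Qed.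

Lemma ball_subS k x : ball e k x \subset ball e k.+1 x.
Proof. exact: subsetUl. Qed.

Lemma mem_ball2 x y z : e x z -> e z y -> y \in ball e 2 x.
Proof.
move=> exz ezy; rewrite [ball _ 2 _]/= !inE; apply/orP; right.
by apply/existsP; exists z; rewrite mem_ball1 exz ezy orbT.
Qed.

Lemma mem_ball_dist x y : dist e x y < #|T| -> y \in ball e (dist e x y) x.
Proof.
rewrite /dist => lt_dT.
have hasT : has (fun k => y \in ball e k x) (iota 0 #|T|).
  by rewrite has_find size_iota.
by have := nth_find 0 hasT; rewrite nth_iota.
Qed.

Lemma dist_leq x y k : y \in ball e k x -> k < #|T| -> dist e x y <= k.
Proof.
move=> yk lt_kT; rewrite leqNgt; apply/negP => lt_kd.
by have := before_find 0 lt_kd; rewrite nth_iota // yk.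
Qed.

Lemma dist_gt0 x y : y != x -> 0 < dist e x y.
Proof.
move=> nyx; rewrite lt0n; apply/negP => /eqP d0.
have lt0T : 0 < #|T| by apply/card_gt0P; exists x.
by have := mem_ball_dist (x := x) (y := y); rewrite d0 inE (negbTE nyx) => /(_ lt0T).
Qed.

Lemma dist_le_diam x y : dist e x y <= diam e.
Proof.
apply: leq_trans (leq_bigmax x).
exact: (leq_bigmax (F := fun y => dist e x y) y).
Qed.

Lemma diam_attained : 0 < diam e -> exists x y, dist e x y = diam e.
Proof.
case: (pickP (@predT T)) => [x0 _ _ | T0]; last by rewrite /diam big_pred0.
have lt0T : 0 < #|T| by apply/card_gt0P; exists x0.
have [x dx] := bigop.eq_bigmax (fun x => \max_y dist e x y) lt0T.
have [y dy] := bigop.eq_bigmax (fun y => dist e x y) lt0T.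
by exists x, y; rewrite /diam dx dy.
Qed.

Lemma dist_le2E x y : dist e x y <= 2 -> dist e x y = (y != x) + (y \in nonadj e x).
Proof.
move=> le_d2; rewrite inE; case: (eqVneq y x) => [-> | nyx] /=.
  have lt0T : 0 < #|T| by apply/card_gt0P; exists x.
  by apply/eqP; rewrite -leqn0 dist_leq // inE.
have lt1T : 1 < #|T|.
  by have := max_card (mem [:: y; x]); rewrite (card_uniqP _) //= inE nyx.
have d_gt0 := dist_gt0 nyx.
case exy: (e x y) => /=.
  by apply/eqP; rewrite eqn_leq d_gt0 dist_leq // mem_ball1 exy orbT.
have : dist e x y != 1.
  apply: contraFN exy => /eqP d1.
  have := mem_ball_dist (x := x) (y := y); rewrite d1 mem_ball1 (negbTE nyx).
  by apply.
lia.
Qed.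

Lemma sum_dist_le2 x : (forall y, dist e x y <= 2) ->
  \sum_y dist e x y = #|T|.-1 + #|nonadj e x|.
Proof.
move=> le_d2; rewrite (eq_bigr _ (fun y _ => dist_le2E (le_d2 y))) big_split /=.
rewrite -(cardC1 x) -!sum1_card.
by congr (_ + _); rewrite [RHS]big_mkcond; apply: eq_bigr => y _; rewrite !inE; case: ifP.
Qed.

Lemma sum_dist_eq_cardP : (forall x y, dist e x y <= 2) ->
  (forall x, \sum_y dist e x y = #|T|) <-> (forall x, #|nonadj e x| = 1).
Proof.
move=> le_d2; have lt0T (x : T) : 0 < #|T| by apply/card_gt0P; exists x.
by split=> h x; have := h x; have := lt0T x; rewrite ?sum_dist_le2 //; lia.
Qed.

Lemma dist_sum_ge2 u v : symmetric e -> (forall x y, dist e x y <= 2) ->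
  dist e u v = 2 -> forall y, 2 <= dist e u y + dist e v y.
Proof.
move=> se le_d2 duv y.
have dvu : dist e v u = 2.
  by rewrite dist_le2E // -duv dist_le2E // !inE se [u == v]eq_sym.
case: (eqVneq y u) => [-> | nyu]; last case: (eqVneq y v) => [-> | nyv].
- by rewrite dvu addn2.
- by rewrite duv.
- by have := dist_gt0 nyu; have := dist_gt0 nyv; lia.
Qed.

Lemma connected_nonadj_card x y : connected_graph e -> irreflexive e ->
  y != x -> ~~ e x y -> 2 < #|T|.
Proof.
move=> conn irr nyx nexy; case/connectP: (conn x y) => -[/= _ yx | z p /= /andP[exz _] _].
  by rewrite yx eqxx in nyx.
have nzx : z != x by apply: contraTneq exz => ->; rewrite irr.
have nzy : z != y by apply: contraNneq nexy => <-.
have := max_card (mem [:: x; y; z]).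
by rewrite (card_uniqP _) //= !inE !negb_or eq_sym nyx eq_sym nzx eq_sym nzy.
Qed.

End Distance.

Lemma graph_iso_sym (T1 T2 : finType) (e1 : rel T1) (e2 : rel T2) :
  graph_iso e2 e1 -> graph_iso e1 e2.
Proof.
case=> g [[g' gK g'K] g_edge]; exists g'; split; first by exists g.
by move=> x y; rewrite -[in RHS](g'K x) -[in RHS](g'K y) g_edge.
Qed.

Section Curvature.
Variables (R : realType) (T : finType) (e : rel T).
Local Open Scope ring_scope.

Lemma curv_eq1P :
  curv_eq e (fun _ => 1%R : R) <-> forall x, \sum_y dist e x y = #|T|.
Proof.
split=> [K1 x | sum_d x].
  apply/eqP; rewrite -(eqr_nat R) natr_sum -(K1 x).
  by apply/eqP/eq_bigr => y _; rewrite mulr1.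
by under eq_bigr do rewrite mulr1; rewrite -natr_sum sum_d.
Qed.

(* Adding rows u and v of D K = n 1 gives sum_y (d(u,y) + d(v,y)) K_y = 2n,
   a sum of n terms each at least 2, so every term equals 2. *)
Lemma curv_eq_ge1_eq1 u v (K : T -> R) :
  (forall y, 2 <= dist e u y + dist e v y)%N -> curv_eq e K ->
  (forall y, 1 <= K y) -> forall y, K y = 1.
Proof.
move=> ge2 K_eq K_ge1 y.
have ge2R z : 2 <= (dist e u z + dist e v z)%:R :> R by rewrite (ler_nat R 2).
have sum0 : \sum_z ((dist e u z + dist e v z)%:R * K z - 2) = 0 :> R.
  rewrite sumrB sumr_const.
  under eq_bigr => z _ do rewrite natrD mulrDl.
  by rewrite big_split /= !K_eq -mulr_natl; lra.
have ge0 z : true -> 0 <= (dist e u z + dist e v z)%:R * K z - 2 :> R.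
  by move=> _; have := ge2R z; have := K_ge1 z; nra.
move: (psumr_eq0P ge0 sum0) => /(_ y isT); have := ge2R y; have := K_ge1 y; nra.
Qed.

Lemma steinerberger_curvature1 u v :
  (forall y, 2 <= dist e u y + dist e v y)%N -> curv_eq e (fun _ => 1%R : R) ->
  steinerberger_curvature e (fun _ => 1%R : R).
Proof.
move=> ge2 K1; split=> // K' K'_eq m m' [[? <-] _] [[y <-] K'_min].
rewrite leNgt; apply/negP => lt1K'.
have K'_ge1 z : 1 <= K' z by apply: le_trans (ltW lt1K') (K'_min z).
by move: lt1K'; rewrite (curv_eq_ge1_eq1 ge2 K'_eq K'_ge1) ltxx.
Qed.

Lemma sharp_diam2_curv_eq1 : simple_graph e -> diam e = 2%N ->
  bonnet_myers_sharp R e -> curv_eq e (fun _ => 1%R : R).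
Proof.
move=> [se _] d2 [_ [K [[K_eq _] [_ K_min]]]].
have K_ge1 y : 1 <= K y by move: (K_min y); rewrite d2 divff // pnatr_eq0.
have le_d2 x y : (dist e x y <= 2)%N by rewrite -d2; apply: dist_le_diam.
have /diam_attained[u [v]] : (0 < diam e)%N by rewrite d2.
rewrite d2 => duv.
have K1 := curv_eq_ge1_eq1 (dist_sum_ge2 se le_d2 duv) K_eq K_ge1.
by move=> x; rewrite -(K_eq x); apply: eq_bigr => y _; rewrite K1.
Qed.

End Curvature.

Section Antipodal.
Variables (T : finType) (e : rel T) (sg : T -> T).
Hypotheses (sgK : involutive sg) (sg_neq : forall x, sg x != x)
  (eE : forall x y, e x y = (y != x) && (y != sg x)).

Lemma nonadj_antipodal x : nonadj e x = [set sg x].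
Proof.
apply/setP => y; rewrite !inE eE negb_and !negbK.
by case: (eqVneq y (sg x)) => [-> | _]; rewrite ?sg_neq ?orbT ?orbF ?andNb.
Qed.

(* One representative of each pair {x, sg x}: the one of smaller rank. *)
Let S := [set x | enum_rank x < enum_rank (sg x)].

Lemma antipodal_notin x : (x \notin S) = (sg x \in S).
Proof.
have : enum_rank x != enum_rank (sg x) by rewrite (inj_eq enum_rank_inj) eq_sym.
rewrite !inE sgK -!(inj_eq val_inj) /=; lia.
Qed.

Lemma card_antipodal : #|T| = (#|S| * 2)%N.
Proof.
have compl_S : ~: S = sg @: S.
  apply/setP => y; rewrite inE antipodal_notin.
  apply/idP/imsetP => [Sy | [x Sx ->]]; first by exists (sg y); rewrite ?sgK.
  by rewrite sgK.
have := cardsC S; rewrite compl_S card_imset; last exact: can_inj sgK.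
lia.
Qed.

Lemma antipodal_graph_iso : exists m, #|T| = (m * 2)%N /\ graph_iso e (cp_rel m).
Proof.
exists #|S|; split; first exact: card_antipodal.
have sg_notin x : x \in S -> sg x \notin S by rewrite antipodal_notin sgK.
pose g (p : 'I_#|S| * bool) := if p.2 then sg (enum_val p.1) else enum_val p.1.
have g_inj : injective g.
  move=> [i b] [j c]; rewrite /g /=; case: b; case: c => gij.
  - by move: gij => /(can_inj sgK)/enum_val_inj ->.
  - by move: (sg_notin _ (enum_valP i)); rewrite gij enum_valP.
  - by move: (sg_notin _ (enum_valP j)); rewrite -gij enum_valP.
  - by move: gij => /enum_val_inj ->.
have g_bij : bijective g.
  by apply: (inj_card_bij g_inj); rewrite card_prod card_ord card_bool card_antipodal.
have g_sg p : sg (g p) = g (p.1, ~~ p.2) by case: p => i []; rewrite /g /= ?sgK.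
apply: graph_iso_sym; exists g; split=> // -[i b] [j c].
rewrite eE g_sg !(inj_eq g_inj) /cp_rel /= !xpair_eqE.
by rewrite [i == j]eq_sym; case: (j == i); case: b; case: c.
Qed.

End Antipodal.

Lemma nonadj1_antipodal (T : finType) (e : rel T) : simple_graph e ->
  (forall x, #|nonadj e x| = 1) ->
  exists sg : T -> T, [/\ involutive sg, forall x, sg x != x
                        & forall x y, e x y = (y != x) && (y != sg x)].
Proof.
move=> [se irr] nonadj1.
pose sg x := odflt x [pick y in nonadj e x].
have mem_nonadj x y : (y \in nonadj e x) = (y == sg x).
  move/eqP/cards1P: (nonadj1 x) => [s sE].
  rewrite /sg sE inE; case: pickP => [z | none] /=; first by rewrite inE => /eqP ->.
  by have := none s; rewrite inE eqxx.
have sg_nonadj x : sg x \in nonadj e x by rewrite mem_nonadj.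
have sg_neq x : sg x != x by have := sg_nonadj x; rewrite inE => /andP[].
exists sg; split=> // [x | x y].
  apply/esym/eqP; rewrite -mem_nonadj inE se eq_sym sg_neq /=.
  by have := sg_nonadj x; rewrite inE => /andP[].
case: (eqVneq y x) => [-> | nyx]; first by rewrite irr.
by rewrite -mem_nonadj inE nyx negbK.
Qed.

Section CocktailParty.
Variable m : nat.

Definition cp_antipode (u : 'I_m * bool) : 'I_m * bool := (u.1, ~~ u.2).

Lemma cp_antipode_neq u : cp_antipode u != u.
Proof. by case: u => i b; rewrite /cp_antipode xpair_eqE eqxx; case: b. Qed.

Lemma cp_relE u v : cp_rel m u v = (v != u) && (v != cp_antipode u).
Proof.
case: u v => [i b] [j c]; rewrite /cp_rel /cp_antipode /= !xpair_eqE eq_sym.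
by case: (j == i); case: b; case: c.
Qed.

Lemma cp_simple : simple_graph (cp_rel m).
Proof. by split=> [u v | u]; rewrite /cp_rel ?eqxx // eq_sym. Qed.

Hypothesis m_ge2 : 2 <= m.

Let o0 : 'I_m := Ordinal (ltnW m_ge2).
Let o1 : 'I_m := Ordinal m_ge2.

Lemma cp_common_neighbour u v : u.1 = v.1 -> exists z, cp_rel m u z && cp_rel m z v.
Proof.
move=> uv; exists (if u.1 == o0 then o1 else o0, false); rewrite /cp_rel /= -uv.
by case: (eqVneq u.1 o0) => [-> | nu0] //=; rewrite nu0 eq_sym.
Qed.

Lemma cp_connected : connected_graph (cp_rel m).
Proof.
move=> u v; case: (eqVneq u.1 v.1) => [uv | nuv]; last by rewrite connect1 // /cp_rel nuv.
have [z /andP[uz zv]] := cp_common_neighbour uv.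
exact: connect_trans (connect1 uz) (connect1 zv).
Qed.

Lemma cp_dist_le2 u v : dist (cp_rel m) u v <= 2.
Proof.
have lt2T : 2 < #|{: 'I_m * bool}| by rewrite card_prod card_ord card_bool; lia.
apply: dist_leq lt2T; case: (eqVneq u.1 v.1) => [uv | nuv].
  by have [z /andP[uz zv]] := cp_common_neighbour uv; apply: mem_ball2 uz zv.
by apply: subsetP (ball_subS _ _ _) _ _; rewrite mem_ball1 /cp_rel nuv orbT.
Qed.

Lemma cp_dist_antipode u : dist (cp_rel m) u (cp_antipode u) = 2.
Proof.
rewrite dist_le2E ?cp_dist_le2 // (nonadj_antipodal cp_antipode_neq cp_relE).
by rewrite inE eqxx cp_antipode_neq.
Qed.

Lemma cp_diam : diam (cp_rel m) = 2.
Proof.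
apply/eqP; rewrite eqn_leq -{2}(cp_dist_antipode (o0, false)) dist_le_diam andbT.
by apply/bigmax_leqP => u _; apply/bigmax_leqP => v _; apply: cp_dist_le2.
Qed.

Lemma cp_sharp (R : realType) : bonnet_myers_sharp R (cp_rel m).
Proof.
have K1 : curv_eq (cp_rel m) (fun _ => 1%R : R).
  apply/curv_eq1P/sum_dist_eq_cardP => [u v | u]; first exact: cp_dist_le2.
  by rewrite (nonadj_antipodal cp_antipode_neq cp_relE) cards1.
split; first by exists (fun _ => 1%R).
exists (fun _ => 1%R); split.
  have [se _] := cp_simple; pose u : 'I_m * bool := (o0, false).
  exact: steinerberger_curvature1 (dist_sum_ge2 se cp_dist_le2 (cp_dist_antipode u)) K1.
by rewrite cp_diam divff ?pnatr_eq0 //; split=> //; exists (o0, false).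
Qed.

End CocktailParty.

Theorem mainTheorem10 (R : realType) :
  (forall (T : finType) (e : rel T),
      simple_graph e -> connected_graph e -> diam e = 2 ->
      bonnet_myers_sharp R e ->
      exists m : nat, 2 <= m /\ graph_iso e (cp_rel m)) /\
  (forall m : nat, 2 <= m ->
      simple_graph (cp_rel m) /\ connected_graph (cp_rel m) /\
      diam (cp_rel m) = 2 /\ bonnet_myers_sharp R (cp_rel m)).
Proof.
split=> [T e simple_e conn_e d2 sharp_e | m m_ge2]; last first.
  split; first exact: cp_simple.
  by split; [exact: cp_connected | split; [exact: cp_diam | exact: cp_sharp]].
have le_d2 x y : dist e x y <= 2 by rewrite -d2 dist_le_diam.
have /curv_eq1P/(sum_dist_eq_cardP le_d2) nonadj1 := sharp_diam2_curv_eq1 simple_e d2 sharp_e.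
have [sg [sgK sg_neq eE]] := nonadj1_antipodal simple_e nonadj1.
have [m [card_T iso_e]] := antipodal_graph_iso sgK sg_neq eE.
exists m; split=> //.
have /diam_attained[x _] : 0 < diam e by rewrite d2.
have := connected_nonadj_card conn_e simple_e.2 (sg_neq x).
by rewrite eE eqxx andbF card_T => /(_ isT); lia.
Qed.
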